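(* Let $F(x,y)=(f(x,y),x,y)$ be a germ at $o=(0,0)$ of a real analytic map into $\mathbf{R}^3_1$ with $f(0,0)=0$, $f_x(0,0)=0$, $f_y(0,0)=1$, such that $\{B_F\neq0\}$ is dense in the domain, $A_F-\varphi B_F^2\equiv0$ for some real analytic function germ $\varphi$ at $o$, and $\nabla B_F(o)=(0,0)$. Let $\alpha_F(y):=f_{xx}(0,y)$ and $\beta_F(y):=\tfrac12 f_{xxx}(0,y)$. Then there exists a real number $\mu_F$ such that $$\alpha_F'+\alpha_F^2+\mu_F=0,\qquad \beta_F''+4\alpha_F\beta_F'=0.$$ Moreover, if $\mu_F>0$ (resp. $\mu_F<0$) then $F$ has no time-like points (resp. no space-like points) near $o$. In particular, if $F$ changes causal type, then $\mu_F=0$.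
   Context: $\mathbf{R}^3_1$ is Lorentz–Minkowski 3-space with coordinates $(t,x,y)$ and inner product $-dt^2+dx^2+dy^2$. $B_F:=1-f_x^2-f_y^2$, $A_F:=(1-f_x^2)f_{yy}+2f_xf_yf_{xy}+(1-f_y^2)f_{xx}$. A point is space-like if $B_F>0$, time-like if $B_F<0$. $F$ changes causal type means every neighborhood of $o$ contains both space-like and time-like points. Primes denote $d/dy$. (For such $F$ one has $f(x,y)=y+\frac{\alpha_F(y)}2x^2+\frac{\beta_F(y)}3x^3+O(x^4)$.) *)

From Stdlib Require Import Reals.
From Coquelicot Require Import Coquelicot.
Open Scope R_scope.

(* g is a real analytic function germ at o = (0,0): on a box |x|,|y| < r it is
   the sum of an absolutely convergent double power series
   sum_{i,j} a i j x^i y^j  (summed by total degree n = i + j). *)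
Definition analytic_germ2 (g : R -> R -> R) : Prop :=
  exists r : R, 0 < r /\ exists a : nat -> nat -> R,
    forall x y : R, Rabs x < r -> Rabs y < r ->
      ex_series (fun n => sum_f_R0 (fun i => Rabs (a i (n - i)%nat) * Rabs x ^ i * Rabs y ^ (n - i)) n)
      /\ is_series (fun n => sum_f_R0 (fun i => a i (n - i)%nat * x ^ i * y ^ (n - i)) n) (g x y).

Definition partial_x (g : R -> R -> R) (x y : R) : R := Derive (fun t => g t y) x.
Definition partial_y (g : R -> R -> R) (x y : R) : R := Derive (fun t => g x t) y.

Definition B_F (f : R -> R -> R) (x y : R) : R :=
  1 - (partial_x f x y)^2 - (partial_y f x y)^2.

Definition A_F (f : R -> R -> R) (x y : R) : R :=
  (1 - (partial_x f x y)^2) * partial_y (partial_y f) x y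
  + 2 * partial_x f x y * partial_y f x y * partial_y (partial_x f) x y
  + (1 - (partial_y f x y)^2) * partial_x (partial_x f) x y.

Definition alpha_F (f : R -> R -> R) (y : R) : R := Derive_n (fun x => f x y) 2 0.
Definition beta_F (f : R -> R -> R) (y : R) : R := / 2 * Derive_n (fun x => f x y) 3 0.

Definition near_o (e x y : R) : Prop := Rabs x < e /\ Rabs y < e.

(* {B_F <> 0} is dense in (some neighbourhood of o serving as) the domain *)
Definition B_nonzero_dense (f : R -> R -> R) : Prop :=
  exists e : R, 0 < e /\
    forall x y, near_o e x y -> forall d : R, 0 < d ->
      exists x' y', near_o e x' y' /\ Rabs (x' - x) < d /\ Rabs (y' - y) < d
                    /\ B_F f x' y' <> 0.

(* F changes causal type at o: every neighbourhood of o contains both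
   space-like (B_F > 0) and time-like (B_F < 0) points *)
Definition changes_causal_type (f : R -> R -> R) : Prop :=
  forall e : R, 0 < e ->
    (exists x y, near_o e x y /\ 0 < B_F f x y) /\
    (exists x y, near_o e x y /\ B_F f x y < 0).

(* Write f and phi as absolutely convergent double power series. Their partial
   derivatives are again such series, so polynomial expressions in them (jets) can
   be differentiated symbolically and are bounded near o.
   On the axis x = 0, the identity G := A_F - phi B_F^2 = 0 and its first
   derivatives express f_xy, f_yy, (B_F)_xy and (B_F)_yy linearly through f_x,
   f_y - 1, B_F, (B_F)_x and (B_F)_y, because f_y is close to 1. These five
   quantities vanish at o, hence, by Gronwall's inequality, on the whole axis.
   There G_xx = 0 and G_xxx = 0 become (alpha' + alpha^2)' = 0, which defines mu,
   and beta'' + 4 alpha beta' = 0; moreover B_F = mu x^2 + O(|x|^3) uniformly in y,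
   so B_F has the sign of mu near o. *)

From Stdlib Require Import Reals Lra Lia Psatz FunctionalExtensionality.
From Coquelicot Require Import Coquelicot.
Open Scope R_scope.
Set Bullet Behavior "Strict Subproofs".

Lemma ex_series_Rabs_le (u A : nat -> R) :
  (forall k, Rabs (u k) <= A k) -> ex_series A -> ex_series u.
Proof. intros HuA HA. exact (ex_series_le (V := R_CompleteNormedModule) u A HuA HA). Qed.

Lemma Rabs_Series_le (u A : nat -> R) :
  (forall k, Rabs (u k) <= A k) -> ex_series A -> Rabs (Series u) <= Series A.
Proof.
  intros HuA HA. eapply Rle_trans; [apply Series_Rabs|].
  - apply (ex_series_Rabs_le _ A); [intro k; rewrite Rabs_Rabsolu|]; auto.
  - apply Series_le; auto. intro k; split; [apply Rabs_pos | auto].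
Qed.

Lemma Rabs_Series_tail_le (u A : nat -> R) n :
  (forall k, Rabs (u k) <= A k) -> ex_series A ->
  Rabs (Series u - sum_f_R0 u n) <= Series A - sum_f_R0 A n.
Proof.
  intros HuA HA. assert (Hu := ex_series_Rabs_le u A HuA HA).
  rewrite (Series_incr_n u (S n)), (Series_incr_n A (S n)) by (lia || auto). simpl pred.
  replace (sum_f_R0 u n + _ - _) with (Series (fun k => u (S n + k)%nat)) by ring.
  replace (sum_f_R0 A n + _ - _) with (Series (fun k => A (S n + k)%nat)) by ring.
  apply Rabs_Series_le; auto. apply (ex_series_incr_n A (S n)); auto.
Qed.

Lemma is_derive_Series (g g' : nat -> R -> R) (A : nat -> R) (c : R) (d : posreal) x :
  Boule c d x ->
  (forall n y, Boule c d y -> is_derive (g n) y (g' n y)) ->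
  (forall y, Boule c d y -> ex_series (fun n => g n y)) ->
  (forall n y, Boule c d y -> Rabs (g' n y) <= A n) -> ex_series A ->
  is_derive (fun y => Series (fun n => g n y)) x (Series (fun n => g' n x)).
Proof.
  intros Hx Hd Hs Hb HA. apply is_derive_Reals.
  apply (CVU_derivable (fun N y => sum_f_R0 (fun n => g n y) N)
           (fun N y => sum_f_R0 (fun n => g' n y) N)
           (fun y => Series (fun n => g n y)) (fun y => Series (fun n => g' n y)) c d); auto.
  - intros eps Heps.
    assert (HL := Series_correct _ HA). apply is_series_Reals in HL.
    destruct (HL eps Heps) as [N HN]. exists N. intros n y Hn Hy.
    specialize (HN n Hn). unfold R_dist in HN. rewrite Rabs_minus_sym in HN.
    eapply Rle_lt_trans; [apply Rabs_Series_tail_le with (A := A); auto|].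
    eapply Rle_lt_trans; [apply Rle_abs | exact HN].
  - intros y Hy. apply is_series_Reals, Series_correct, Hs, Hy.
  - intros n y Hy. induction n; simpl.
    + apply is_derive_Reals; auto.
    + apply derivable_pt_lim_plus; auto. apply is_derive_Reals; auto.
Qed.

Local Notation coefs := (nat -> nat -> R).

Definition dps_hom (a : coefs) n x y := sum_f_R0 (fun i => a i (n - i)%nat * x ^ i * y ^ (n - i)) n.
Definition dps (a : coefs) x y := Series (fun n => dps_hom a n x y).
Definition coef_norm (a : coefs) n := sum_f_R0 (fun i => Rabs (a i (n - i)%nat)) n.
Definition dps_abs_conv (a : coefs) r :=
  forall rho, 0 <= rho < r -> ex_series (fun n => coef_norm a n * rho ^ n).

Definition coef_swap (a : coefs) : coefs := fun i j => a j i.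
Definition coef_dx (a : coefs) : coefs := fun i j => INR (S i) * a (S i) j.
(* Through the exchange of variables, the y-derivative of a series will follow
   from its x-derivative. *)
Definition coef_dy (a : coefs) : coefs := coef_swap (coef_dx (coef_swap a)).

Lemma coef_norm_ge0 a n : 0 <= coef_norm a n.
Proof. apply cond_pos_sum. intro; apply Rabs_pos. Qed.

Lemma Rabs_dps_hom_le a n x y rho :
  Rabs x <= rho -> Rabs y <= rho -> Rabs (dps_hom a n x y) <= coef_norm a n * rho ^ n.
Proof.
  intros Hx Hy. eapply Rle_trans; [apply Rsum_abs|].
  unfold coef_norm. rewrite Rmult_comm, scal_sum. apply sum_Rle. intros i Hi.
  rewrite !Rabs_mult, <- !RPow_abs.
  replace (rho ^ n) with (rho ^ i * rho ^ (n - i)) by (rewrite <- pow_add; f_equal; lia).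
  rewrite Rmult_assoc. apply Rmult_le_compat_l; [apply Rabs_pos|].
  apply Rmult_le_compat; try apply pow_le; try apply Rabs_pos; apply pow_incr; auto using Rabs_pos.
Qed.

Section Convergent.
Variables (a : coefs) (r : R).
Hypothesis Ha : dps_abs_conv a r.

Lemma ex_series_dps_hom x y : Rabs x < r -> Rabs y < r -> ex_series (fun n => dps_hom a n x y).
Proof.
  intros Hx Hy. set (rho := Rmax (Rabs x) (Rabs y)).
  apply (ex_series_Rabs_le _ (fun n => coef_norm a n * rho ^ n)).
  - intro n. apply Rabs_dps_hom_le; [apply Rmax_l | apply Rmax_r].
  - apply Ha. split; [eapply Rle_trans; [apply Rabs_pos | apply Rmax_l] | apply Rmax_lub_lt; auto].
Qed.

Lemma Rabs_dps_le x y rho : 0 <= rho < r -> Rabs x <= rho -> Rabs y <= rho ->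
  Rabs (dps a x y) <= Series (fun n => coef_norm a n * rho ^ n).
Proof. intros. apply Rabs_Series_le; auto. intro; apply Rabs_dps_hom_le; auto. Qed.

End Convergent.

Lemma dps_hom_swap a n x y : dps_hom (coef_swap a) n x y = dps_hom a n y x.
Proof.
  unfold dps_hom. rewrite <- sum_f_R0_skip. apply sum_eq. intros i Hi.
  unfold coef_swap. replace (n - (n - i))%nat with i by lia. ring.
Qed.

Lemma dps_swap a x y : dps (coef_swap a) x y = dps a y x.
Proof. apply Series_ext. intro; apply dps_hom_swap. Qed.

Lemma coef_norm_swap a n : coef_norm (coef_swap a) n = coef_norm a n.
Proof.
  unfold coef_norm. rewrite <- sum_f_R0_skip. apply sum_eq. intros i Hi.
  unfold coef_swap. now replace (n - (n - i))%nat with i by lia.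
Qed.

Lemma dps_abs_conv_swap a r : dps_abs_conv a r -> dps_abs_conv (coef_swap a) r.
Proof.
  intros Ha rho Hrho. eapply ex_series_ext; [|exact (Ha rho Hrho)].
  intro n; simpl. now rewrite coef_norm_swap.
Qed.

Lemma coef_norm_dx_le a n : coef_norm (coef_dx a) n <= INR (S n) * coef_norm a (S n).
Proof.
  unfold coef_norm, coef_dx. rewrite (decomp_sum _ (S n)) by lia. simpl pred.
  apply Rle_trans with (INR (S n) * sum_f_R0 (fun i => Rabs (a (S i) (S n - S i)%nat)) n).
  - rewrite scal_sum. apply sum_Rle. intros i Hi.
    rewrite Rabs_mult, Rabs_right by (apply Rle_ge, pos_INR).
    rewrite Rmult_comm. replace (S n - S i)%nat with (n - i)%nat by lia.
    apply Rmult_le_compat_l; [apply Rabs_pos | apply le_INR; lia].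
  - apply Rmult_le_compat_l; [apply pos_INR|].
    pose proof (Rabs_pos (a 0%nat (S n - 0)%nat)). lra.
Qed.

Lemma pow_mul_gap_le rho s n : 0 <= rho < s -> INR (S n) * rho ^ n * (s - rho) <= s ^ S n.
Proof.
  intros H. induction n.
  - simpl. lra.
  - assert (rho ^ S n <= s ^ S n) by (apply pow_incr; lra).
    rewrite S_INR. simpl in *. nra.
Qed.

Lemma dps_abs_conv_dx a r : dps_abs_conv a r -> dps_abs_conv (coef_dx a) r.
Proof.
  intros Ha rho Hrho. set (s := (rho + r) / 2).
  assert (Hs : 0 < s - rho) by (unfold s; lra).
  assert (HaS := Ha s ltac:(unfold s; lra)). apply ex_series_incr_1 in HaS.
  apply (ex_series_Rabs_le _ (fun n => / (s - rho) * (coef_norm a (S n) * s ^ S n))).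
  - intro n. pose proof (coef_norm_ge0 a (S n)). pose proof (pow_le rho n (proj1 Hrho)).
    rewrite Rabs_right by (apply Rle_ge, Rmult_le_pos; [apply coef_norm_ge0 | auto]).
    apply Rle_trans with (coef_norm a (S n) * (INR (S n) * rho ^ n)).
    + pose proof (coef_norm_dx_le a n). nra.
    + pose proof (pow_mul_gap_le rho s n ltac:(unfold s; lra)).
      apply Rmult_le_reg_r with (s - rho); auto.
      replace (/ (s - rho) * _ * (s - rho)) with (coef_norm a (S n) * s ^ S n) by (field; lra).
      nra.
  - apply (ex_series_scal_l (V := R_NormedModule) (/ (s - rho))). exact HaS.
Qed.

Lemma dps_abs_conv_dy a r : dps_abs_conv a r -> dps_abs_conv (coef_dy a) r.
Proof. intro; apply dps_abs_conv_swap, dps_abs_conv_dx, dps_abs_conv_swap; auto. Qed.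

Lemma is_derive_sum_f_R0 (h h' : nat -> R -> R) n x :
  (forall i, is_derive (h i) x (h' i x)) ->
  is_derive (fun t => sum_f_R0 (fun i => h i t) n) x (sum_f_R0 (fun i => h' i x) n).
Proof.
  intros H. induction n; simpl; auto.
  apply (is_derive_plus (fun t => sum_f_R0 (fun i => h i t) n) (h (S n))); auto.
Qed.

Lemma is_derive_dps_hom_x a n x y :
  is_derive (fun t => dps_hom a (S n) t y) x (dps_hom (coef_dx a) n x y).
Proof.
  unfold dps_hom.
  replace (sum_f_R0 _ n) with
    (sum_f_R0 (fun i => a i (S n - i)%nat * (INR i * x ^ pred i) * y ^ (S n - i)) (S n)).
  - apply (is_derive_sum_f_R0 (fun i t => a i (S n - i)%nat * t ^ i * y ^ (S n - i))
             (fun i t => a i (S n - i)%nat * (INR i * t ^ pred i) * y ^ (S n - i))).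
    intro i. generalize (a i (S n - i)%nat) (y ^ (S n - i)); intros c d. auto_derive; auto. ring.
  - rewrite (decomp_sum _ (S n)) by lia. simpl pred. simpl INR at 1.
    rewrite Rmult_0_l, Rmult_0_r, Rmult_0_l, Rplus_0_l.
    apply sum_eq. intros i Hi. unfold coef_dx.
    replace (S n - S i)%nat with (n - i)%nat by lia. simpl pred. ring.
Qed.

Lemma is_derive_dps_x a r x y : dps_abs_conv a r -> Rabs x < r -> Rabs y < r ->
  is_derive (fun t => dps a t y) x (dps (coef_dx a) x y).
Proof.
  intros Ha Hx Hy.
  assert (Hm : Rmax (Rabs x) (Rabs y) < r) by (apply Rmax_lub_lt; auto).
  assert (Hmx := Rmax_l (Rabs x) (Rabs y)). assert (Hmy := Rmax_r (Rabs x) (Rabs y)).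
  set (rho := (Rmax (Rabs x) (Rabs y) + r) / 2).
  assert (Hrho : 0 <= rho < r) by (unfold rho; pose proof (Rabs_pos x); lra).
  assert (Hyrho : Rabs y <= rho) by (unfold rho; lra).
  assert (Hd : 0 < rho - Rabs x) by (unfold rho; lra).
  set (d := mkposreal _ Hd).
  assert (Hball : forall t, Boule x d t -> Rabs t <= rho).
  { intros t Ht. unfold Boule in Ht; simpl in Ht. pose proof (Rabs_triang_inv t x). lra. }
  (* the degree-0 term is constant, so the derivative series is shifted by one *)
  set (g' := fun n t => match n with O => 0 | S m => dps_hom (coef_dx a) m t y end).
  replace (dps (coef_dx a) x y) with (Series (fun n => g' n x)).
  - apply (is_derive_Series (fun n t => dps_hom a n t y) g'
             (fun n => match n with O => 0 | S m => coef_norm (coef_dx a) m * rho ^ m end) x d).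
    + unfold Boule; rewrite Rminus_eq_0, Rabs_R0; apply cond_pos.
    + intros [|n] t Ht; [unfold dps_hom; simpl; auto_derive; auto; ring | apply is_derive_dps_hom_x].
    + intros t Ht. apply (ex_series_dps_hom a r); auto. specialize (Hball t Ht). lra.
    + intros [|n] t Ht; simpl; [rewrite Rabs_R0; lra | apply Rabs_dps_hom_le; auto].
    + apply ex_series_incr_1. exact (dps_abs_conv_dx a r Ha rho Hrho).
  - unfold dps. rewrite Series_incr_1; [simpl; ring|].
    apply ex_series_incr_1, (ex_series_dps_hom (coef_dx a) r); auto. apply dps_abs_conv_dx; auto.
Qed.

Lemma is_derive_dps_y a r x y : dps_abs_conv a r -> Rabs x < r -> Rabs y < r ->
  is_derive (fun t => dps a x t) y (dps (coef_dy a) x y).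
Proof.
  intros Ha Hx Hy. unfold coef_dy. rewrite dps_swap.
  apply (is_derive_ext (fun t => dps (coef_swap a) t x)); [intro; apply dps_swap|].
  apply (is_derive_dps_x _ r); auto. apply dps_abs_conv_swap; auto.
Qed.

Definition coef_deriv (a : coefs) i j : coefs := Nat.iter i coef_dx (Nat.iter j coef_dy a).
Definition pderiv (a : coefs) i j x y := dps (coef_deriv a i j) x y.

Lemma coef_dx_dy a : coef_dx (coef_dy a) = coef_dy (coef_dx a).
Proof.
  apply functional_extensionality; intro i; apply functional_extensionality; intro j.
  unfold coef_dy, coef_dx, coef_swap. ring.
Qed.

Lemma coef_deriv_Sy a i j : coef_deriv a i (S j) = coef_dy (coef_deriv a i j).
Proof.
  unfold coef_deriv. simpl. induction i as [|i IH]; simpl; auto.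
  now rewrite IH, coef_dx_dy.
Qed.

Lemma dps_abs_conv_deriv a r i j : dps_abs_conv a r -> dps_abs_conv (coef_deriv a i j) r.
Proof.
  intro Ha. induction i as [|i IH]; [induction j as [|j IHj]|]; auto.
  - rewrite coef_deriv_Sy. apply dps_abs_conv_dy; auto.
  - apply dps_abs_conv_dx; auto.
Qed.

Lemma is_derive_pderiv_x a r i j x y : dps_abs_conv a r -> Rabs x < r -> Rabs y < r ->
  is_derive (fun t => pderiv a i j t y) x (pderiv a (S i) j x y).
Proof. intros. apply (is_derive_dps_x _ r); auto. apply dps_abs_conv_deriv; auto. Qed.

Lemma is_derive_pderiv_y a r i j x y : dps_abs_conv a r -> Rabs x < r -> Rabs y < r ->
  is_derive (fun t => pderiv a i j x t) y (pderiv a i (S j) x y).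
Proof.
  intros. unfold pderiv. rewrite coef_deriv_Sy.
  apply (is_derive_dps_y _ r); auto. apply dps_abs_conv_deriv; auto.
Qed.

Arguments pderiv : simpl never.

(* Polynomial expressions in the partial derivatives of two germs f and phi:
   [JF i j] and [JPhi i j] stand for the derivatives of order (i, j). *)
Inductive jet : Type :=
  | JC (c : R) | JF (i j : nat) | JPhi (i j : nat) | JAdd (e1 e2 : jet) | JMul (e1 e2 : jet).

Fixpoint jet_eval (a b : coefs) (e : jet) (x y : R) : R :=
  match e with
  | JC c => c
  | JF i j => pderiv a i j x y
  | JPhi i j => pderiv b i j x y
  | JAdd e1 e2 => jet_eval a b e1 x y + jet_eval a b e2 x y
  | JMul e1 e2 => jet_eval a b e1 x y * jet_eval a b e2 x y
  end.

Fixpoint jet_dx (e : jet) : jet :=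
  match e with
  | JC _ => JC 0
  | JF i j => JF (S i) j
  | JPhi i j => JPhi (S i) j
  | JAdd e1 e2 => JAdd (jet_dx e1) (jet_dx e2)
  | JMul e1 e2 => JAdd (JMul (jet_dx e1) e2) (JMul e1 (jet_dx e2))
  end.

Fixpoint jet_dy (e : jet) : jet :=
  match e with
  | JC _ => JC 0
  | JF i j => JF i (S j)
  | JPhi i j => JPhi i (S j)
  | JAdd e1 e2 => JAdd (jet_dy e1) (jet_dy e2)
  | JMul e1 e2 => JAdd (JMul (jet_dy e1) e2) (JMul e1 (jet_dy e2))
  end.

Fixpoint jet_bound (KF KPhi : nat -> nat -> R) (e : jet) : R :=
  match e with
  | JC c => Rabs c
  | JF i j => KF i j
  | JPhi i j => KPhi i j
  | JAdd e1 e2 => jet_bound KF KPhi e1 + jet_bound KF KPhi e2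
  | JMul e1 e2 => jet_bound KF KPhi e1 * jet_bound KF KPhi e2
  end.

Lemma Rabs_jet_eval_le a b KF KPhi e x y :
  (forall i j, Rabs (pderiv a i j x y) <= KF i j) -> (forall i j, Rabs (pderiv b i j x y) <= KPhi i j) ->
  Rabs (jet_eval a b e x y) <= jet_bound KF KPhi e.
Proof.
  intros HF HPhi. induction e; simpl; auto; [lra| |].
  - eapply Rle_trans; [apply Rabs_triang | lra].
  - rewrite Rabs_mult. apply Rmult_le_compat; auto; apply Rabs_pos.
Qed.

Lemma locally_Rabs_lt (P : R -> Prop) r x :
  Rabs x < r -> (forall t, Rabs t < r -> P t) -> locally x P.
Proof.
  intros Hx H. assert (Hd : 0 < r - Rabs x) by lra. exists (mkposreal _ Hd). intros t Ht.
  apply H. change (Rabs (t - x) < r - Rabs x) in Ht. pose proof (Rabs_triang_inv t x). lra.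
Qed.

Section Jets.
Variables (a b : coefs) (r : R).
Hypotheses (Ha : dps_abs_conv a r) (Hb : dps_abs_conv b r).

Lemma is_derive_jet_x e x y : Rabs x < r -> Rabs y < r ->
  is_derive (fun t => jet_eval a b e t y) x (jet_eval a b (jet_dx e) x y).
Proof.
  intros Hx Hy. induction e; simpl.
  - apply (is_derive_const (K := R_AbsRing) (V := R_NormedModule)).
  - apply (is_derive_pderiv_x _ r); auto.
  - apply (is_derive_pderiv_x _ r); auto.
  - apply (is_derive_plus (fun t => jet_eval a b e1 t y) (fun t => jet_eval a b e2 t y)); auto.
  - apply (is_derive_mult (fun t => jet_eval a b e1 t y) (fun t => jet_eval a b e2 t y)); auto.
    intros; apply Rmult_comm.
Qed.

Lemma is_derive_jet_y e x y : Rabs x < r -> Rabs y < r ->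
  is_derive (fun t => jet_eval a b e x t) y (jet_eval a b (jet_dy e) x y).
Proof.
  intros Hx Hy. induction e; simpl.
  - apply (is_derive_const (K := R_AbsRing) (V := R_NormedModule)).
  - apply (is_derive_pderiv_y _ r); auto.
  - apply (is_derive_pderiv_y _ r); auto.
  - apply (is_derive_plus (fun t => jet_eval a b e1 x t) (fun t => jet_eval a b e2 x t)); auto.
  - apply (is_derive_mult (fun t => jet_eval a b e1 x t) (fun t => jet_eval a b e2 x t)); auto.
    intros; apply Rmult_comm.
Qed.

Definition represents (g : R -> R -> R) (e : jet) :=
  forall x y, Rabs x < r -> Rabs y < r -> g x y = jet_eval a b e x y.

Lemma represents_partial_x g e : represents g e -> represents (partial_x g) (jet_dx e).
Proof.
  intros Hg x y Hx Hy. unfold partial_x.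
  rewrite (Derive_ext_loc _ (fun t => jet_eval a b e t y)).
  - apply is_derive_unique, is_derive_jet_x; auto.
  - apply (locally_Rabs_lt _ r); auto.
Qed.

Lemma represents_partial_y g e : represents g e -> represents (partial_y g) (jet_dy e).
Proof.
  intros Hg x y Hx Hy. unfold partial_y.
  rewrite (Derive_ext_loc _ (fun t => jet_eval a b e x t)).
  - apply is_derive_unique, is_derive_jet_y; auto.
  - apply (locally_Rabs_lt _ r); auto.
Qed.

Lemma represents_0_dx e : represents (fun _ _ => 0) e -> represents (fun _ _ => 0) (jet_dx e).
Proof.
  intros H0 x y Hx Hy. rewrite <- (represents_partial_x _ _ H0 x y Hx Hy).
  unfold partial_x. now rewrite Derive_const.
Qed.

Lemma represents_0_dy e : represents (fun _ _ => 0) e -> represents (fun _ _ => 0) (jet_dy e).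
Proof.
  intros H0 x y Hx Hy. rewrite <- (represents_partial_y _ _ H0 x y Hx Hy).
  unfold partial_y. now rewrite Derive_const.
Qed.

End Jets.

Lemma Rabs_le_of_between_0 y x : Rmin 0 y <= x <= Rmax 0 y -> Rabs x <= Rabs y.
Proof.
  intro H. rewrite Rmin_comm, Rmax_comm in H.
  apply Rabs_le_between_min_max in H. now rewrite !Rminus_0_r in H.
Qed.

Lemma continuity_pt_of_is_derive (g : R -> R) t l : is_derive g t l -> continuity_pt g t.
Proof.
  intro H. apply continuity_pt_filterlim.
  apply (ex_derive_continuous (K := R_AbsRing) (V := R_NormedModule)). now exists l.
Qed.

Lemma mvt_0 (g g' : R -> R) rho y :
  (forall t, Rabs t < rho -> is_derive g t (g' t)) -> Rabs y < rho ->
  exists c, Rabs c <= Rabs y /\ g y - g 0 = g' c * y.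
Proof.
  intros Hd Hy.
  destruct (MVT_gen g 0 y g') as [c [Hc Heq]].
  - intros t Ht. apply Hd. assert (Rabs t <= Rabs y) by (apply Rabs_le_of_between_0; lra). lra.
  - intros t Ht. apply (continuity_pt_of_is_derive g t (g' t)), Hd.
    assert (Rabs t <= Rabs y) by (apply Rabs_le_of_between_0; lra). lra.
  - exists c. split; [apply Rabs_le_of_between_0; lra | lra].
Qed.

Lemma Rabs_sub_le_of_derive_le (g g' : R -> R) rho K n y : 0 <= K ->
  (forall t, Rabs t < rho -> is_derive g t (g' t)) ->
  (forall t, Rabs t < rho -> Rabs (g' t) <= K * Rabs t ^ n) -> Rabs y < rho ->
  Rabs (g y - g 0) <= K * Rabs y ^ S n.
Proof.
  intros HK Hd Hb Hy. destruct (mvt_0 g g' rho y Hd Hy) as [c [Hcy ->]].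
  assert (Rabs (g' c) <= K * Rabs y ^ n).
  { eapply Rle_trans; [apply Hb; lra|].
    apply Rmult_le_compat_l; auto. apply pow_incr; split; auto; apply Rabs_pos. }
  rewrite Rabs_mult. simpl. pose proof (Rabs_pos y). pose proof (Rabs_pos (g' c)). nra.
Qed.

Lemma eq_of_is_derive_0 (g : R -> R) rho y :
  (forall t, Rabs t < rho -> is_derive g t 0) -> Rabs y < rho -> g y = g 0.
Proof.
  intros Hd Hy. destruct (mvt_0 g (fun _ => 0) rho y Hd Hy) as [c [_ Hc]]. lra.
Qed.

Lemma is_derive_0_of_const (g g' : R -> R) rho c t :
  (forall t, Rabs t < rho -> is_derive g t (g' t)) ->
  (forall t, Rabs t < rho -> g t = c) -> Rabs t < rho -> g' t = 0.
Proof.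
  intros Hd Hc Ht. rewrite <- (is_derive_unique g t (g' t)) by auto.
  apply is_derive_unique, (is_derive_ext_loc (fun _ => c)).
  - apply (locally_Rabs_lt _ rho); auto. intros; rewrite Hc; auto.
  - apply (is_derive_const (K := R_AbsRing) (V := R_NormedModule)).
Qed.

Lemma Rabs_sub_quadratic_le (g g1 g2 g3 : R -> R) rho mu K x :
  (forall t, Rabs t < rho -> is_derive g t (g1 t)) ->
  (forall t, Rabs t < rho -> is_derive g1 t (g2 t)) ->
  (forall t, Rabs t < rho -> is_derive g2 t (g3 t)) ->
  (forall t, Rabs t < rho -> Rabs (g3 t) <= K) ->
  g 0 = 0 -> g1 0 = 0 -> g2 0 = 2 * mu -> Rabs x < rho ->
  Rabs (g x - mu * x ^ 2) <= K * Rabs x ^ 3.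
Proof.
  intros Hg Hg1 Hg2 Hg3 H0 H10 H20 Hx.
  assert (HK : 0 <= K).
  { eapply Rle_trans; [apply Rabs_pos | apply (Hg3 0)]. rewrite Rabs_R0. pose proof (Rabs_pos x). lra. }
  assert (Hb2 : forall t, Rabs t < rho -> Rabs (g2 t - 2 * mu) <= K * Rabs t ^ 1).
  { intros t Ht. rewrite <- H20. apply (Rabs_sub_le_of_derive_le g2 g3 rho); auto.
    intros s Hs. rewrite pow_O, Rmult_1_r. auto. }
  assert (Hb1 : forall t, Rabs t < rho -> Rabs (g1 t - 2 * mu * t) <= K * Rabs t ^ 2).
  { intros t Ht.
    replace (g1 t - 2 * mu * t) with ((g1 t - 2 * mu * t) - (g1 0 - 2 * mu * 0)) by (rewrite H10; ring).
    apply (Rabs_sub_le_of_derive_le (fun s => g1 s - 2 * mu * s) (fun s => g2 s - 2 * mu) rho); auto.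
    intros s Hs.
    apply (is_derive_minus (K := R_AbsRing) (V := R_NormedModule) g1 (fun s => 2 * mu * s)); auto.
    auto_derive; auto; ring. }
  replace (g x - mu * x ^ 2) with ((g x - mu * x ^ 2) - (g 0 - mu * 0 ^ 2)) by (rewrite H0; ring).
  apply (Rabs_sub_le_of_derive_le (fun s => g s - mu * s ^ 2) (fun s => g1 s - 2 * mu * s) rho); auto.
  intros s Hs. apply (is_derive_minus (K := R_AbsRing) (V := R_NormedModule) g (fun s => mu * s ^ 2)); auto.
  auto_derive; auto; ring.
Qed.

(* The sign condition makes N t * exp (k t), which vanishes at 0, non-increasing
   in |t| on the way to y. *)
Lemma gronwall_one_side (N N' : R -> R) rho k y :
  (forall t, Rabs t < rho -> is_derive N t (N' t)) -> (forall t, Rabs t < rho -> 0 <= N t) ->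
  N 0 = 0 -> Rabs y < rho ->
  (forall c, Rabs c <= Rabs y -> (N' c + k * N c) * y <= 0) -> N y = 0.
Proof.
  intros Hd Hpos H0 Hy Hsg.
  destruct (mvt_0 (fun t => N t * exp (k * t)) (fun t => (N' t + k * N t) * exp (k * t)) rho y)
    as [c [Hcy Heq]]; auto.
  - intros t Ht. auto_derive; [exists (N' t); auto|].
    replace (Derive (fun x : R => N x) t) with (N' t) by (symmetry; apply is_derive_unique; auto). ring.
  - rewrite H0, Rmult_0_l, Rminus_0_r in Heq. specialize (Hsg c Hcy).
    assert (Hneg : N y * exp (k * y) <= 0).
    { rewrite Heq. replace (_ * y) with ((N' c + k * N c) * y * exp (k * c)) by ring.
      pose proof (exp_pos (k * c)). nra. }
    pose proof (exp_pos (k * y)). pose proof (Hpos y Hy). nra.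
Qed.

Lemma gronwall_zero (N N' : R -> R) rho C :
  (forall t, Rabs t < rho -> is_derive N t (N' t)) -> (forall t, Rabs t < rho -> 0 <= N t) ->
  (forall t, Rabs t < rho -> Rabs (N' t) <= C * N t) -> N 0 = 0 ->
  forall y, Rabs y < rho -> N y = 0.
Proof.
  intros Hd Hpos Hb H0 y Hy.
  destruct (Rle_dec 0 y); [apply (gronwall_one_side N N' rho (- C)) | apply (gronwall_one_side N N' rho C)];
    auto; intros c Hc; assert (Hbc := Hb c ltac:(lra)); apply Rabs_le_between in Hbc; nra.
Qed.

Section AxisDerivatives.
Variables (a : coefs) (r rho : R) (i : nat).
Hypotheses (Ha : dps_abs_conv a r) (Hrho : rho <= r).

Lemma pderiv_axis_dy_of_const j c :
  (forall t, Rabs t < rho -> pderiv a i j 0 t = c) ->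
  forall t, Rabs t < rho -> pderiv a i (S j) 0 t = 0.
Proof.
  intros Hc t Ht. apply (is_derive_0_of_const (fun t => pderiv a i j 0 t) _ rho c t); auto.
  intros s Hs. apply (is_derive_pderiv_y _ r); auto; rewrite ?Rabs_R0; pose proof (Rabs_pos s); lra.
Qed.

Lemma pderiv_axis_dy_iter_of_const j c :
  (forall t, Rabs t < rho -> pderiv a i j 0 t = c) ->
  forall k t, Rabs t < rho -> pderiv a i (S k + j) 0 t = 0.
Proof.
  intros Hc k. induction k as [|k IH].
  - exact (pderiv_axis_dy_of_const j c Hc).
  - exact (pderiv_axis_dy_of_const (S k + j) 0 IH).
Qed.

End AxisDerivatives.

Lemma Rabs_le_of_mul_eq q u w : 1/2 <= q -> q * u = w -> Rabs u <= 2 * Rabs w.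
Proof. intros Hq <-. rewrite Rabs_mult, (Rabs_right q) by lra. pose proof (Rabs_pos u). nra. Qed.

Lemma Rabs_solve4_le q u w1 w2 w3 w4 v1 v2 v3 v4 S V1 V2 V3 V4 : 1/2 <= q ->
  q * u = w1 * v1 + w2 * v2 + w3 * v3 + w4 * v4 ->
  Rabs w1 <= S -> Rabs w2 <= S -> Rabs w3 <= S -> Rabs w4 <= S ->
  Rabs v1 <= V1 -> Rabs v2 <= V2 -> Rabs v3 <= V3 -> Rabs v4 <= V4 ->
  Rabs u <= 2 * (V1 + V2 + V3 + V4) * S.
Proof.
  intros Hq Hu Hw1 Hw2 Hw3 Hw4 Hv1 Hv2 Hv3 Hv4. apply Rabs_le_of_mul_eq in Hu; auto.
  assert (Hterm : forall w v V, Rabs w <= S -> Rabs v <= V -> Rabs (w * v) <= V * S).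
  { intros w v V Hw Hv. rewrite Rabs_mult, Rmult_comm. apply Rmult_le_compat; auto; apply Rabs_pos. }
  pose proof (Hterm _ _ _ Hw1 Hv1). pose proof (Hterm _ _ _ Hw2 Hv2).
  pose proof (Hterm _ _ _ Hw3 Hv3). pose proof (Hterm _ _ _ Hw4 Hv4).
  pose proof (Rabs_triang (w1 * v1) (w2 * v2)).
  pose proof (Rabs_triang (w1 * v1 + w2 * v2) (w3 * v3)).
  pose proof (Rabs_triang (w1 * v1 + w2 * v2 + w3 * v3) (w4 * v4)). lra.
Qed.

Lemma Rabs_solve2_le q u w1 w2 v1 v2 S V1 V2 : 1/2 <= q -> q * u = w1 * v1 + w2 * v2 ->
  Rabs w1 <= S -> Rabs w2 <= S -> Rabs v1 <= V1 -> Rabs v2 <= V2 -> Rabs u <= 2 * (V1 + V2) * S.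
Proof.
  intros Hq Hu Hw1 Hw2 Hv1 Hv2. pose proof (Rabs_pos w1).
  replace (V1 + V2) with (V1 + V2 + 0 + 0) by ring.
  apply (Rabs_solve4_le q u w1 w2 0 0 v1 v2 0 0); rewrite ?Rabs_R0; lra.
Qed.

Lemma sum_sq5_eq0 z1 z2 z3 z4 z5 : z1 * z1 + (z2 * z2 + (z3 * z3 + (z4 * z4 + z5 * z5))) = 0 ->
  z1 = 0 /\ z2 = 0 /\ z3 = 0 /\ z4 = 0 /\ z5 = 0.
Proof. intro H. repeat split; nra. Qed.

Lemma Rabs_sum_sq5_deriv_le z1 z2 z3 z4 z5 w1 w2 w3 w4 w5 K :
  let S := Rabs z1 + Rabs z2 + Rabs z3 + Rabs z4 + Rabs z5 in
  0 <= K -> Rabs w1 <= K * S -> Rabs w2 <= K * S -> Rabs w3 <= K * S ->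
  Rabs w4 <= K * S -> Rabs w5 <= K * S ->
  Rabs (2 * (z1 * w1 + (z2 * w2 + (z3 * w3 + (z4 * w4 + z5 * w5)))))
    <= 10 * K * (z1 * z1 + (z2 * z2 + (z3 * z3 + (z4 * z4 + z5 * z5)))).
Proof.
  intros S HK H1 H2 H3 H4 H5.
  assert (Hterm : forall z w, Rabs w <= K * S -> Rabs (z * w) <= Rabs z * (K * S)).
  { intros z w Hw. rewrite Rabs_mult. apply Rmult_le_compat_l; auto; apply Rabs_pos. }
  assert (Hlin : Rabs (z1 * w1 + (z2 * w2 + (z3 * w3 + (z4 * w4 + z5 * w5)))) <= K * S * S).
  { pose proof (Hterm z1 w1 H1). pose proof (Hterm z2 w2 H2). pose proof (Hterm z3 w3 H3).
    pose proof (Hterm z4 w4 H4). pose proof (Hterm z5 w5 H5).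
    pose proof (Rabs_triang (z4 * w4) (z5 * w5)).
    pose proof (Rabs_triang (z3 * w3) (z4 * w4 + z5 * w5)).
    pose proof (Rabs_triang (z2 * w2) (z3 * w3 + (z4 * w4 + z5 * w5))).
    pose proof (Rabs_triang (z1 * w1) (z2 * w2 + (z3 * w3 + (z4 * w4 + z5 * w5)))).
    unfold S in *. nra. }
  (* Cauchy-Schwarz for the l^1 norm S *)
  assert (Hcs : S * S <= 5 * (z1 * z1 + (z2 * z2 + (z3 * z3 + (z4 * z4 + z5 * z5))))).
  { assert (Habs : forall z, z * z = Rabs z * Rabs z) by (intro z; exact (Rsqr_abs z)).
    rewrite (Habs z1), (Habs z2), (Habs z3), (Habs z4), (Habs z5). unfold S.
    generalize (Rabs z1) (Rabs z2) (Rabs z3) (Rabs z4) (Rabs z5); intros u1 u2 u3 u4 u5.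
    pose proof (Rle_0_sqr (u1 - u2)). pose proof (Rle_0_sqr (u1 - u3)). pose proof (Rle_0_sqr (u1 - u4)).
    pose proof (Rle_0_sqr (u1 - u5)). pose proof (Rle_0_sqr (u2 - u3)). pose proof (Rle_0_sqr (u2 - u4)).
    pose proof (Rle_0_sqr (u2 - u5)). pose proof (Rle_0_sqr (u3 - u4)). pose proof (Rle_0_sqr (u3 - u5)).
    pose proof (Rle_0_sqr (u4 - u5)). unfold Rsqr in *. lra. }
  rewrite Rabs_mult, Rabs_right by lra.
  assert (0 <= K * (S * S)) by (apply Rmult_le_pos; auto; apply Rle_0_sqr). nra.
Qed.

Definition jet_sub e1 e2 := JAdd e1 (JMul (JC (-1)) e2).
Definition jet_B := jet_sub (jet_sub (JC 1) (JMul (JF 1 0) (JF 1 0))) (JMul (JF 0 1) (JF 0 1)).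
Definition jet_A :=
  JAdd (JAdd (JMul (jet_sub (JC 1) (JMul (JF 1 0) (JF 1 0))) (JF 0 2))
             (JMul (JMul (JMul (JC 2) (JF 1 0)) (JF 0 1)) (JF 1 1)))
       (JMul (jet_sub (JC 1) (JMul (JF 0 1) (JF 0 1))) (JF 2 0)).
Definition jet_G := jet_sub jet_A (JMul (JPhi 0 0) (JMul jet_B jet_B)).

Section JetIdentities.
Variables (a b : coefs).
Local Notation ev e x y := (jet_eval a b e x y).

Lemma jet_B_dx_eval x y :
  ev (jet_dx jet_B) x y = -2 * (pderiv a 1 0 x y * pderiv a 2 0 x y + pderiv a 0 1 x y * pderiv a 1 1 x y).
Proof. simpl. ring. Qed.

Lemma jet_B_dy_eval x y :
  ev (jet_dy jet_B) x y = -2 * (pderiv a 1 0 x y * pderiv a 1 1 x y + pderiv a 0 1 x y * pderiv a 0 2 x y).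
Proof. simpl. ring. Qed.

End JetIdentities.

(* Modulo the ideal generated by B, B_x, B_y and f_x, the first derivatives of G
   are -(1/2) f_y B_xy and -(1/2) f_y B_yy; this is what lets G = 0 be solved for
   the second derivatives of B wherever f_y does not vanish. *)
Lemma jet_G_dx_decomp : exists c1 c2 c3 c4, forall a b x y,
  jet_eval a b (jet_dx jet_G) x y =
    -(1/2) * pderiv a 0 1 x y * jet_eval a b (jet_dy (jet_dx jet_B)) x y
    + jet_eval a b jet_B x y * jet_eval a b c1 x y + jet_eval a b (jet_dx jet_B) x y * jet_eval a b c2 x y
    + jet_eval a b (jet_dy jet_B) x y * jet_eval a b c3 x y + pderiv a 1 0 x y * jet_eval a b c4 x y.
Proof.
  exists (jet_sub (JAdd (JF 3 0) (JF 1 2)) (JMul (JPhi 1 0) jet_B)),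
    (JAdd (JAdd (JF 2 0) (JF 0 2))
          (JAdd (JMul (JC (-1/2)) (JF 2 0)) (JMul (JC (-2)) (JMul (JPhi 0 0) jet_B)))),
    (JMul (JC (-1/2)) (JF 1 1)), (JMul (JC (-1/2)) (jet_dx (jet_dx jet_B))).
  intros. simpl. field.
Qed.

Lemma jet_G_dy_decomp : exists c1 c2 c3 c4, forall a b x y,
  jet_eval a b (jet_dy jet_G) x y =
    -(1/2) * pderiv a 0 1 x y * jet_eval a b (jet_dy (jet_dy jet_B)) x y
    + jet_eval a b jet_B x y * jet_eval a b c1 x y + jet_eval a b (jet_dx jet_B) x y * jet_eval a b c2 x y
    + jet_eval a b (jet_dy jet_B) x y * jet_eval a b c3 x y + pderiv a 1 0 x y * jet_eval a b c4 x y.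
Proof.
  exists (jet_sub (JAdd (JF 2 1) (JF 0 3)) (JMul (JPhi 0 1) jet_B)), (JMul (JC (-1/2)) (JF 1 1)),
    (JAdd (JAdd (JF 2 0) (JF 0 2))
          (JAdd (JMul (JC (-1/2)) (JF 0 2)) (JMul (JC (-2)) (JMul (JPhi 0 0) jet_B)))),
    (JMul (JC (-1/2)) (jet_dx (jet_dy jet_B))).
  intros. simpl. field.
Qed.

Section OnAxis.
Variables (a b : coefs) (y : R).
Hypotheses (Hfx : forall j, pderiv a 1 j 0 y = 0) (Hfy : pderiv a 0 1 0 y = 1)
  (Hfyy : forall j, pderiv a 0 (S (S j)) 0 y = 0).

Lemma jet_G_dxx_on_axis :
  jet_eval a b (jet_dx (jet_dx jet_G)) 0 y = pderiv a 2 2 0 y + 2 * pderiv a 2 0 0 y * pderiv a 2 1 0 y.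
Proof. simpl. rewrite !Hfx, !Hfy, !Hfyy. ring. Qed.

Lemma jet_G_dxxx_on_axis :
  jet_eval a b (jet_dx (jet_dx (jet_dx jet_G))) 0 y
  = pderiv a 3 2 0 y + 4 * pderiv a 2 0 0 y * pderiv a 3 1 0 y.
Proof. simpl. rewrite !Hfx, !Hfy, !Hfyy. ring. Qed.

Lemma jet_B_dxx_on_axis :
  jet_eval a b (jet_dx (jet_dx jet_B)) 0 y = -2 * (pderiv a 2 0 0 y * pderiv a 2 0 0 y + pderiv a 2 1 0 y).
Proof. simpl. rewrite !Hfx, !Hfy. ring. Qed.

End OnAxis.

Definition jet_energy :=
  let sq e := JMul e e in
  JAdd (sq (JF 1 0)) (JAdd (sq (jet_sub (JF 0 1) (JC 1)))
    (JAdd (sq jet_B) (JAdd (sq (jet_dx jet_B)) (sq (jet_dy jet_B))))).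

Section Axis.
Variables (a b : coefs) (r : R).
Hypotheses (Hr : 0 < r) (Ha : dps_abs_conv a r) (Hb : dps_abs_conv b r).
Local Notation ev e x y := (jet_eval a b e x y).

Lemma jet_bounded e : exists K, 0 <= K /\
  forall x y, Rabs x <= r / 2 -> Rabs y <= r / 2 -> Rabs (ev e x y) <= K.
Proof.
  set (K := jet_bound (fun i j => Series (fun n => coef_norm (coef_deriv a i j) n * (r / 2) ^ n))
                      (fun i j => Series (fun n => coef_norm (coef_deriv b i j) n * (r / 2) ^ n)) e).
  assert (HK : forall x y, Rabs x <= r / 2 -> Rabs y <= r / 2 -> Rabs (ev e x y) <= K).
  { intros x y Hx Hy. apply Rabs_jet_eval_le; intros i j;
      apply (Rabs_dps_le _ r); auto using dps_abs_conv_deriv; lra. }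
  exists K. split; auto.
  eapply Rle_trans; [apply Rabs_pos | apply (HK 0 0)]; rewrite Rabs_R0; lra.
Qed.

Lemma fy_ge_half_near_0 : pderiv a 0 1 0 0 = 1 ->
  exists rho, 0 < rho <= r / 2 /\ forall t, Rabs t < rho -> 1/2 <= pderiv a 0 1 0 t.
Proof.
  intros H1. destruct (jet_bounded (JF 0 2)) as [K [HK HbK]].
  exists (Rmin (r / 2) (1 / (2 * (K + 1)))).
  split; [split; [apply Rmin_pos; [lra | apply Rdiv_lt_0_compat; lra] | apply Rmin_l]|].
  intros t Ht. assert (Htr := Rlt_le_trans _ _ _ Ht (Rmin_l _ _)).
  assert (HtK := Rlt_le_trans _ _ _ Ht (Rmin_r _ _)).
  apply (Rmult_lt_compat_l (2 * (K + 1))) in HtK; [|lra].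
  replace (2 * (K + 1) * (1 / (2 * (K + 1)))) with 1 in HtK by (field; lra).
  assert (Hm : Rabs (pderiv a 0 1 0 t - pderiv a 0 1 0 0) <= K * Rabs t ^ 1).
  { apply (Rabs_sub_le_of_derive_le _ (fun s => pderiv a 0 2 0 s) (r / 2)); auto.
    - intros s Hs. apply (is_derive_pderiv_y _ r); auto; rewrite ?Rabs_R0; lra.
    - intros s Hs. rewrite pow_O, Rmult_1_r. apply (HbK 0 s); rewrite ?Rabs_R0; lra. }
  rewrite H1, pow_1 in Hm. apply Rabs_le_between in Hm. pose proof (Rabs_pos t). nra.
Qed.

Definition axis_mu := - (pderiv a 2 1 0 0 + pderiv a 2 0 0 0 * pderiv a 2 0 0 0).

Section NearAxis.
Variable rho : R.
Hypotheses (Hrho : 0 < rho <= r / 2) (Hhalf : forall t, Rabs t < rho -> 1/2 <= pderiv a 0 1 0 t).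
Hypothesis HG : represents a b r (fun _ _ => 0) jet_G.

Let z1 t := pderiv a 1 0 0 t.
Let z2 t := pderiv a 0 1 0 t - 1.
Let z3 t := ev jet_B 0 t.
Let z4 t := ev (jet_dx jet_B) 0 t.
Let z5 t := ev (jet_dy jet_B) 0 t.
Let zsum t := Rabs (z1 t) + Rabs (z2 t) + Rabs (z3 t) + Rabs (z4 t) + Rabs (z5 t).

Lemma Rabs_le_zsum t :
  Rabs (z1 t) <= zsum t /\ Rabs (z2 t) <= zsum t /\ Rabs (z3 t) <= zsum t /\
  Rabs (z4 t) <= zsum t /\ Rabs (z5 t) <= zsum t.
Proof.
  unfold zsum. pose proof (Rabs_pos (z1 t)). pose proof (Rabs_pos (z2 t)). pose proof (Rabs_pos (z3 t)).
  pose proof (Rabs_pos (z4 t)). pose proof (Rabs_pos (z5 t)). lra.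
Qed.

Lemma axis_fxy_le : exists K, 0 <= K /\ forall t, Rabs t < rho -> Rabs (pderiv a 1 1 0 t) <= K * zsum t.
Proof.
  destruct (jet_bounded (JF 2 0)) as [K [HK0 HK]]. exists (2 * (1/2 + K)). split; [lra|]. intros t Ht.
  assert (H0 : Rabs 0 <= r / 2) by (rewrite Rabs_R0; lra). assert (Ht' : Rabs t <= r / 2) by lra.
  destruct (Rabs_le_zsum t) as [Hz1 [_ [_ [Hz4 _]]]].
  apply (Rabs_solve2_le (pderiv a 0 1 0 t) _ (z4 t) (z1 t) (-1/2) (- pderiv a 2 0 0 t)); auto.
  - unfold z1, z4. rewrite jet_B_dx_eval. field.
  - rewrite Rabs_left by lra. lra.
  - rewrite Rabs_Ropp. apply (HK 0 t); auto.
Qed.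

Lemma axis_fyy_le : exists K, 0 <= K /\ forall t, Rabs t < rho -> Rabs (pderiv a 0 2 0 t) <= K * zsum t.
Proof.
  destruct (jet_bounded (JF 1 1)) as [K [HK0 HK]]. exists (2 * (1/2 + K)). split; [lra|]. intros t Ht.
  assert (H0 : Rabs 0 <= r / 2) by (rewrite Rabs_R0; lra). assert (Ht' : Rabs t <= r / 2) by lra.
  destruct (Rabs_le_zsum t) as [Hz1 [_ [_ [_ Hz5]]]].
  apply (Rabs_solve2_le (pderiv a 0 1 0 t) _ (z5 t) (z1 t) (-1/2) (- pderiv a 1 1 0 t)); auto.
  - unfold z1, z5. rewrite jet_B_dy_eval. field.
  - rewrite Rabs_left by lra. lra.
  - rewrite Rabs_Ropp. apply (HK 0 t); auto.
Qed.

Lemma axis_solve_le g e : represents a b r (fun _ _ => 0) g ->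
  (exists c1 c2 c3 c4, forall a b x y, jet_eval a b g x y =
    -(1/2) * pderiv a 0 1 x y * jet_eval a b e x y
    + jet_eval a b jet_B x y * jet_eval a b c1 x y + jet_eval a b (jet_dx jet_B) x y * jet_eval a b c2 x y
    + jet_eval a b (jet_dy jet_B) x y * jet_eval a b c3 x y + pderiv a 1 0 x y * jet_eval a b c4 x y) ->
  exists K, 0 <= K /\ forall t, Rabs t < rho -> Rabs (ev e 0 t) <= K * zsum t.
Proof.
  intros Hg [c1 [c2 [c3 [c4 Hdec]]]].
  destruct (jet_bounded c1) as [K1 [HK1' HK1]]. destruct (jet_bounded c2) as [K2 [HK2' HK2]].
  destruct (jet_bounded c3) as [K3 [HK3' HK3]]. destruct (jet_bounded c4) as [K4 [HK4' HK4]].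
  exists (2 * (2 * K1 + 2 * K2 + 2 * K3 + 2 * K4)). split; [lra|]. intros t Ht.
  assert (H0 : Rabs 0 <= r / 2) by (rewrite Rabs_R0; lra). assert (Ht' : Rabs t <= r / 2) by lra.
  destruct (Rabs_le_zsum t) as [Hz1 [_ [Hz3 [Hz4 Hz5]]]].
  assert (H2 : forall v K, Rabs v <= K -> Rabs (2 * v) <= 2 * K)
    by (intros v K Hv; rewrite Rabs_mult, Rabs_right; lra).
  apply (Rabs_solve4_le (pderiv a 0 1 0 t) _ (z3 t) (z4 t) (z5 t) (z1 t)
           (2 * ev c1 0 t) (2 * ev c2 0 t) (2 * ev c3 0 t) (2 * ev c4 0 t)); auto.
  assert (Hz := Hg 0 t ltac:(lra) ltac:(lra)). rewrite Hdec in Hz. unfold z1, z3, z4, z5. lra.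
Qed.

Lemma jet_energy_eval s : ev jet_energy 0 s =
  z1 s * z1 s + (z2 s * z2 s + (z3 s * z3 s + (z4 s * z4 s + z5 s * z5 s))).
Proof. unfold z1, z2, z3, z4, z5. simpl. ring. Qed.

Lemma jet_energy_dy_eval s : ev (jet_dy jet_energy) 0 s =
  2 * (z1 s * pderiv a 1 1 0 s + (z2 s * pderiv a 0 2 0 s + (z3 s * z5 s
    + (z4 s * ev (jet_dy (jet_dx jet_B)) 0 s + z5 s * ev (jet_dy (jet_dy jet_B)) 0 s)))).
Proof. unfold z1, z2, z3, z4, z5. simpl. ring. Qed.

Lemma axis_energy_dy_le : exists C, forall s, Rabs s < rho ->
  Rabs (ev (jet_dy jet_energy) 0 s) <= C * ev jet_energy 0 s.
Proof.
  destruct axis_fxy_le as [K1 [HK1' HK1]]. destruct axis_fyy_le as [K2 [HK2' HK2]].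
  destruct (axis_solve_le (jet_dx jet_G) (jet_dy (jet_dx jet_B))) as [K4 [HK4' HK4]];
    [apply represents_0_dx; auto | apply jet_G_dx_decomp|].
  destruct (axis_solve_le (jet_dy jet_G) (jet_dy (jet_dy jet_B))) as [K5 [HK5' HK5]];
    [apply represents_0_dy; auto | apply jet_G_dy_decomp|].
  set (K := K1 + K2 + 1 + K4 + K5). exists (10 * K). intros s Hs.
  assert (HKS : forall k w, k <= K -> Rabs w <= k * zsum s -> Rabs w <= K * zsum s).
  { intros k w Hk Hw. assert (0 <= zsum s) by (eapply Rle_trans; [apply Rabs_pos | apply Rabs_le_zsum]).
    nra. }
  rewrite jet_energy_eval, jet_energy_dy_eval.
  apply Rabs_sum_sq5_deriv_le; [unfold K; lra | ..].
  - apply (HKS K1); [unfold K; lra | auto].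
  - apply (HKS K2); [unfold K; lra | auto].
  - apply (HKS 1); [unfold K; lra | rewrite Rmult_1_l; apply Rabs_le_zsum].
  - apply (HKS K4); [unfold K; lra | auto].
  - apply (HKS K5); [unfold K; lra | auto].
Qed.

Hypotheses (Hfx0 : pderiv a 1 0 0 0 = 0) (Hfy0 : pderiv a 0 1 0 0 = 1)
  (HBx0 : ev (jet_dx jet_B) 0 0 = 0) (HBy0 : ev (jet_dy jet_B) 0 0 = 0).

Lemma axis_energy_zero t : Rabs t < rho ->
  z1 t = 0 /\ z2 t = 0 /\ z3 t = 0 /\ z4 t = 0 /\ z5 t = 0.
Proof.
  intros Ht. apply sum_sq5_eq0. rewrite <- jet_energy_eval.
  destruct axis_energy_dy_le as [C HC].
  apply (gronwall_zero (fun s => ev jet_energy 0 s) (fun s => ev (jet_dy jet_energy) 0 s) rho C); auto.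
  - intros s Hs. apply (is_derive_jet_y a b r Ha Hb); rewrite ?Rabs_R0; lra.
  - intros s Hs. rewrite jet_energy_eval. nra.
  - rewrite jet_energy_eval. unfold z1, z2, z3, z4, z5. rewrite Hfx0, Hfy0, HBx0, HBy0.
    simpl. rewrite Hfx0, Hfy0. ring.
Qed.

Lemma axis_fx_derivs j t : Rabs t < rho -> pderiv a 1 j 0 t = 0.
Proof.
  intros Ht. destruct j as [|j].
  - apply (axis_energy_zero t Ht).
  - replace (S j) with (S j + 0)%nat by lia.
    apply (pderiv_axis_dy_iter_of_const a r rho 1 Ha ltac:(lra) 0 0); auto.
    intros s Hs. apply (axis_energy_zero s Hs).
Qed.

Lemma axis_fy t : Rabs t < rho -> pderiv a 0 1 0 t = 1.
Proof. intros Ht. destruct (axis_energy_zero t Ht) as [_ [Hz2 _]]. unfold z2 in Hz2. lra. Qed.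

Lemma axis_fy_derivs j t : Rabs t < rho -> pderiv a 0 (S (S j)) 0 t = 0.
Proof.
  intros Ht. replace (S (S j)) with (S j + 1)%nat by lia.
  apply (pderiv_axis_dy_iter_of_const a r rho 0 Ha ltac:(lra) 1 1); auto.
  exact axis_fy.
Qed.

Lemma axis_riccati t : Rabs t < rho ->
  pderiv a 2 1 0 t + pderiv a 2 0 0 t * pderiv a 2 0 0 t + axis_mu = 0.
Proof.
  intros Ht. unfold axis_mu.
  set (e := JAdd (JF 2 1) (JMul (JF 2 0) (JF 2 0))).
  enough (Hc : ev e 0 t = ev e 0 0) by (simpl in Hc; lra).
  apply (eq_of_is_derive_0 _ rho); auto. intros s Hs.
  assert (Hd : ev (jet_dy e) 0 s = 0).
  { transitivity (ev (jet_dx (jet_dx jet_G)) 0 s).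
    - rewrite jet_G_dxx_on_axis; [simpl; ring | intro j; apply axis_fx_derivs; auto
        | apply axis_fy; auto | intro j; apply axis_fy_derivs; auto].
    - symmetry. refine (represents_0_dx a b r Ha Hb _ (represents_0_dx a b r Ha Hb _ HG) 0 s _ _);
        rewrite ?Rabs_R0; lra. }
  pose proof (is_derive_jet_y a b r Ha Hb e 0 s) as Hder. rewrite Hd in Hder.
  apply Hder; rewrite ?Rabs_R0; lra.
Qed.

Lemma axis_beta_eq t : Rabs t < rho ->
  pderiv a 3 2 0 t + 4 * pderiv a 2 0 0 t * pderiv a 3 1 0 t = 0.
Proof.
  intros Ht. rewrite <- (jet_G_dxxx_on_axis a b t); [| intro j; apply axis_fx_derivs; auto
    | apply axis_fy; auto | intro j; apply axis_fy_derivs; auto].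
  symmetry. refine (represents_0_dx a b r Ha Hb _
    (represents_0_dx a b r Ha Hb _ (represents_0_dx a b r Ha Hb _ HG)) 0 t _ _); rewrite ?Rabs_R0; lra.
Qed.

Lemma jet_B_near_quadratic : exists K, forall x y, Rabs x < rho -> Rabs y < rho ->
  Rabs (ev jet_B x y - axis_mu * x ^ 2) <= K * Rabs x ^ 3.
Proof.
  destruct (jet_bounded (jet_dx (jet_dx (jet_dx jet_B)))) as [K [_ HK]].
  exists K. intros x y Hx Hy.
  destruct (axis_energy_zero y Hy) as [_ [_ [HB [HBx _]]]].
  apply (Rabs_sub_quadratic_le (fun s => ev jet_B s y) (fun s => ev (jet_dx jet_B) s y)
           (fun s => ev (jet_dx (jet_dx jet_B)) s y) (fun s => ev (jet_dx (jet_dx (jet_dx jet_B))) s y) rho);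
    auto; try (intros s Hs; apply (is_derive_jet_x a b r Ha Hb); lra).
  - intros s Hs. apply HK; lra.
  - rewrite jet_B_dxx_on_axis; [| intro j; apply axis_fx_derivs; auto | apply axis_fy; auto].
    pose proof (axis_riccati y Hy). lra.
Qed.

End NearAxis.
End Axis.

Lemma analytic_germ2_dps g : analytic_germ2 g -> exists r a, 0 < r /\ dps_abs_conv a r /\
  forall x y, Rabs x < r -> Rabs y < r -> g x y = dps a x y.
Proof.
  intros [r [Hr [a Ha]]]. exists r, a. split; [auto | split].
  - intros rho Hrho. destruct (Ha rho rho) as [Habs _]; try (rewrite Rabs_right; lra).
    eapply ex_series_ext; [|exact Habs]. intro n. unfold coef_norm. rewrite Rmult_comm, scal_sum.
    apply sum_eq. intros i Hi. rewrite (Rabs_right rho), Rmult_assoc, <- pow_add by lra.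
    do 2 f_equal. lia.
  - intros x y Hx Hy. destruct (Ha x y Hx Hy) as [_ Hs]. symmetry. apply is_series_unique, Hs.
Qed.

Lemma jets_of_germs f phi e0 : analytic_germ2 f -> analytic_germ2 phi -> 0 < e0 ->
  exists a b r, 0 < r <= e0 /\ dps_abs_conv a r /\ dps_abs_conv b r /\
    represents a b r f (JF 0 0) /\ represents a b r phi (JPhi 0 0).
Proof.
  intros Hf Hphi He0.
  destruct (analytic_germ2_dps f Hf) as [r1 [a [Hr1 [Ha Hfa]]]].
  destruct (analytic_germ2_dps phi Hphi) as [r2 [b [Hr2 [Hb Hphib]]]].
  set (r := Rmin r1 (Rmin r2 e0)).
  assert (Hrr1 : r <= r1) by apply Rmin_l.
  assert (Hrr2 : r <= r2) by (eapply Rle_trans; [apply Rmin_r | apply Rmin_l]).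
  assert (Hrr3 : r <= e0) by (eapply Rle_trans; [apply Rmin_r | apply Rmin_r]).
  exists a, b, r. repeat split; auto.
  - repeat apply Rmin_pos; auto.
  - intros rho Hrho. apply Ha. lra.
  - intros rho Hrho. apply Hb. lra.
  - intros x y Hx Hy. apply Hfa; lra.
  - intros x y Hx Hy. apply Hphib; lra.
Qed.

Section Germ.
Variables (f phi : R -> R -> R) (a b : coefs) (r : R).
Hypotheses (Hr : 0 < r) (Ha : dps_abs_conv a r) (Hb : dps_abs_conv b r).
Hypotheses (Hf : represents a b r f (JF 0 0)) (Hphi : represents a b r phi (JPhi 0 0)).

Let Hfx := represents_partial_x a b r Ha Hb f _ Hf.
Let Hfy := represents_partial_y a b r Ha Hb f _ Hf.
Let Hfxx := represents_partial_x a b r Ha Hb _ _ Hfx.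

Lemma represents_B_F : represents a b r (B_F f) jet_B.
Proof. intros x y Hx Hy. unfold B_F. rewrite Hfx, Hfy by auto. simpl. ring. Qed.

Lemma represents_A_F : represents a b r (A_F f) jet_A.
Proof.
  intros x y Hx Hy. unfold A_F.
  rewrite Hfx, Hfy, Hfxx, (represents_partial_y a b r Ha Hb _ _ Hfx),
    (represents_partial_y a b r Ha Hb _ _ Hfy) by auto.
  simpl. ring.
Qed.

Lemma represents_G e : r <= e ->
  (forall x y, near_o e x y -> A_F f x y - phi x y * (B_F f x y) ^ 2 = 0) ->
  represents a b r (fun _ _ => 0) jet_G.
Proof.
  intros Hre HAB x y Hx Hy.
  specialize (HAB x y (conj (Rlt_le_trans _ _ _ Hx Hre) (Rlt_le_trans _ _ _ Hy Hre))).
  rewrite represents_A_F, represents_B_F, Hphi in HAB by auto. rewrite <- HAB. simpl. ring.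
Qed.

Lemma initial_jets : partial_x f 0 0 = 0 -> partial_y f 0 0 = 1 ->
  partial_x (B_F f) 0 0 = 0 -> partial_y (B_F f) 0 0 = 0 ->
  pderiv a 1 0 0 0 = 0 /\ pderiv a 0 1 0 0 = 1 /\
  jet_eval a b (jet_dx jet_B) 0 0 = 0 /\ jet_eval a b (jet_dy jet_B) 0 0 = 0.
Proof.
  assert (H0 : Rabs 0 < r) by (rewrite Rabs_R0; auto).
  rewrite Hfx, Hfy, (represents_partial_x a b r Ha Hb _ _ represents_B_F),
    (represents_partial_y a b r Ha Hb _ _ represents_B_F) by auto.
  simpl. auto.
Qed.

Lemma alpha_F_on_axis y : Rabs y < r -> alpha_F f y = pderiv a 2 0 0 y.
Proof.
  intros Hy. change (alpha_F f y) with (partial_x (partial_x f) 0 y).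
  rewrite Hfxx; rewrite ?Rabs_R0; auto.
Qed.

Lemma Derive_alpha_F_on_axis y : Rabs y < r -> Derive (alpha_F f) y = pderiv a 2 1 0 y.
Proof.
  intros Hy. change (Derive (alpha_F f) y) with (partial_y (partial_x (partial_x f)) 0 y).
  rewrite (represents_partial_y a b r Ha Hb _ _ Hfxx); rewrite ?Rabs_R0; auto.
Qed.

Let Hfxxx := represents_partial_x a b r Ha Hb _ _ Hfxx.
Let Hfxxxy := represents_partial_y a b r Ha Hb _ _ Hfxxx.

Lemma Derive_beta_F y : Derive (beta_F f) y = / 2 * partial_y (partial_x (partial_x (partial_x f))) 0 y.
Proof. unfold beta_F. now rewrite Derive_scal. Qed.

Lemma Derive_beta_F_on_axis y : Rabs y < r -> Derive (beta_F f) y = / 2 * pderiv a 3 1 0 y.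
Proof. intros Hy. rewrite Derive_beta_F, Hfxxxy; rewrite ?Rabs_R0; auto. Qed.

Lemma Derive_n_beta_F_on_axis y : Rabs y < r -> Derive_n (beta_F f) 2 y = / 2 * pderiv a 3 2 0 y.
Proof.
  intros Hy. simpl. rewrite (Derive_ext _ _ _ Derive_beta_F), Derive_scal.
  change (Derive (partial_y (partial_x (partial_x (partial_x f))) 0) y)
    with (partial_y (partial_y (partial_x (partial_x (partial_x f)))) 0 y).
  rewrite (represents_partial_y a b r Ha Hb _ _ Hfxxxy); rewrite ?Rabs_R0; auto.
Qed.

End Germ.

Lemma nonneg_near_of_quadratic_le (g : R -> R -> R) rho mu K : 0 < rho -> 0 < mu ->
  (forall x y, Rabs x < rho -> Rabs y < rho -> Rabs (g x y - mu * x ^ 2) <= K * Rabs x ^ 3) ->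
  exists e, 0 < e /\ forall x y, near_o e x y -> 0 <= g x y.
Proof.
  intros Hrho Hmu Hg. pose proof (Rabs_pos K).
  exists (Rmin rho (mu / (Rabs K + 1))). split.
  - apply Rmin_pos; auto. apply Rdiv_lt_0_compat; lra.
  - intros x y [Hx Hy].
    assert (Hx1 := Rlt_le_trans _ _ _ Hx (Rmin_l _ _)).
    assert (Hy1 := Rlt_le_trans _ _ _ Hy (Rmin_l _ _)).
    assert (Hx2 := Rlt_le_trans _ _ _ Hx (Rmin_r _ _)).
    apply (Rmult_lt_compat_l (Rabs K + 1)) in Hx2; [|lra].
    replace ((Rabs K + 1) * (mu / (Rabs K + 1))) with mu in Hx2 by (field; lra).
    specialize (Hg x y Hx1 Hy1). apply Rabs_le_between in Hg. rewrite <- (pow2_abs x) in Hg.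
    pose proof (Rabs_pos x). pose proof (Rle_abs K).
    assert (0 <= Rabs x ^ 2 * (mu - K * Rabs x)) by (apply Rmult_le_pos; [apply pow2_ge_0 | nra]).
    nra.
Qed.

Lemma causal_type_of_quadratic_le f rho mu K : 0 < rho ->
  (forall x y, Rabs x < rho -> Rabs y < rho -> Rabs (B_F f x y - mu * x ^ 2) <= K * Rabs x ^ 3) ->
  (0 < mu -> exists e, 0 < e /\ forall x y, near_o e x y -> ~ (B_F f x y < 0)) /\
  (mu < 0 -> exists e, 0 < e /\ forall x y, near_o e x y -> ~ (0 < B_F f x y)).
Proof.
  intros Hrho HB. split; intros Hmu.
  - destruct (nonneg_near_of_quadratic_le (B_F f) rho mu K) as [e [He Hn]]; auto.
    exists e. split; auto. intros x y Hxy. specialize (Hn x y Hxy). lra.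
  - destruct (nonneg_near_of_quadratic_le (fun x y => - B_F f x y) rho (- mu) K) as [e [He Hn]];
      [auto | lra | |].
    + intros x y Hx Hy. rewrite <- Rabs_Ropp.
      replace (- (- B_F f x y - - mu * x ^ 2)) with (B_F f x y - mu * x ^ 2) by ring. auto.
    + exists e. split; auto. intros x y Hxy. specialize (Hn x y Hxy). simpl in Hn. lra.
Qed.

Lemma changes_causal_type_mu_0 f mu :
  (0 < mu -> exists e, 0 < e /\ forall x y, near_o e x y -> ~ (B_F f x y < 0)) ->
  (mu < 0 -> exists e, 0 < e /\ forall x y, near_o e x y -> ~ (0 < B_F f x y)) ->
  changes_causal_type f -> mu = 0.
Proof.
  intros Hpos Hneg Hch. destruct (Rtotal_order mu 0) as [Hlt | [Heq | Hgt]]; auto; exfalso.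
  - destruct (Hneg Hlt) as [e [He Hn]]. destruct (Hch e He) as [[x [y [Hxy HB]]] _]. exact (Hn x y Hxy HB).
  - destruct (Hpos Hgt) as [e [He Hn]]. destruct (Hch e He) as [_ [x [y [Hxy HB]]]]. exact (Hn x y Hxy HB).
Qed.

Theorem proposition4p1 (f : R -> R -> R) :
  analytic_germ2 f ->
  f 0 0 = 0 -> partial_x f 0 0 = 0 -> partial_y f 0 0 = 1 ->
  B_nonzero_dense f ->
  (exists phi : R -> R -> R, analytic_germ2 phi /\
     exists e : R, 0 < e /\ forall x y, near_o e x y ->
       A_F f x y - phi x y * (B_F f x y)^2 = 0) ->
  partial_x (B_F f) 0 0 = 0 -> partial_y (B_F f) 0 0 = 0 ->
  exists mu : R,
    (exists e : R, 0 < e /\ forall y, Rabs y < e ->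
       Derive (alpha_F f) y + (alpha_F f y)^2 + mu = 0 /\
       Derive_n (beta_F f) 2 y + 4 * alpha_F f y * Derive (beta_F f) y = 0) /\
    (0 < mu -> exists e : R, 0 < e /\ forall x y, near_o e x y -> ~ (B_F f x y < 0)) /\
    (mu < 0 -> exists e : R, 0 < e /\ forall x y, near_o e x y -> ~ (0 < B_F f x y)) /\
    (changes_causal_type f -> mu = 0).
Proof.
  intros Hfa _ Hfx Hfy _ [phi [Hphia [e0 [He0 HAB]]]] HBx HBy.
  destruct (jets_of_germs f phi e0 Hfa Hphia He0) as [a [b [r [[Hr Hre] [Ha [Hb [Hf Hphi]]]]]]].
  pose proof (represents_G f phi a b r Ha Hb Hf Hphi e0 Hre HAB) as HG.
  destruct (initial_jets f a b r Hr Ha Hb Hf Hfx Hfy HBx HBy) as [Hfx0 [Hfy0 [HBx0 HBy0]]].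
  destruct (fy_ge_half_near_0 a b r Hr Ha Hb Hfy0) as [rho [Hrho Hhalf]].
  pose proof (axis_riccati a b r Hr Ha Hb rho Hrho Hhalf HG Hfx0 Hfy0 HBx0 HBy0) as Hric.
  pose proof (axis_beta_eq a b r Hr Ha Hb rho Hrho Hhalf HG Hfx0 Hfy0 HBx0 HBy0) as Hbeta.
  destruct (jet_B_near_quadratic a b r Hr Ha Hb rho Hrho Hhalf HG Hfx0 Hfy0 HBx0 HBy0) as [K HK].
  destruct (causal_type_of_quadratic_le f rho (axis_mu a) K) as [Hpos Hneg]; [lra | |].
  { intros x y Hx Hy. rewrite (represents_B_F f a b r Ha Hb Hf) by lra. auto. }
  exists (axis_mu a). split; [|split; [|split]]; auto.
  - exists rho. split; [lra|]. intros y Hy. assert (Hyr : Rabs y < r) by lra.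
    rewrite (Derive_alpha_F_on_axis f a b r Hr Ha Hb Hf), (alpha_F_on_axis f a b r Hr Ha Hb Hf),
      (Derive_n_beta_F_on_axis f a b r Hr Ha Hb Hf), (Derive_beta_F_on_axis f a b r Hr Ha Hb Hf) by auto.
    specialize (Hric y Hy). specialize (Hbeta y Hy). split; simpl; lra.
  - apply (changes_causal_type_mu_0 f); auto.
Qed.
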